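(* For every directed space $X$, there is the equality $\vec{\mathrm{Sp}}(\vec{\Omega}(X))=X$. Consequently the category of directed spaces is isomorphic to a full reflective subcategory of the category of multipointed $d$-spaces.
   Context: Let $\mathbf{Top}$ be the category of $\Delta$-generated spaces (or of $\Delta$-Hausdorff $\Delta$-generated spaces). For $\ell>0$ let $\mu_\ell(t)=t/\ell$, $\mu_\ell:[0,\ell]\to[0,1]$. $\mathcal{M}(\ell,\ell')$ is the set of non-decreasing surjective continuous maps $[0,\ell]\to[0,\ell']$; $\mathcal{I}(\ell)$ is the set of non-decreasing continuous maps $[0,1]\to[0,\ell]$ (constant maps allowed). The Moore composition of $\gamma_1:[0,\ell_1]\to U$, $\gamma_2:[0,\ell_2]\to U$ with $\gamma_1(\ell_1)=\gamma_2(0)$ is $\gamma_1*\gamma_2:[0,\ell_1+\ell_2]\to U$, equal to $\gamma_1(t)$ on $[0,\ell_1]$ and $\gamma_2(t-\ell_1)$ on $[\ell_1,\ell_1+\ell_2]$; the normalized composition of $\gamma_1,\gamma_2:[0,1]\to U$ is $(\gamma_1\mu_{1/2})*(\gamma_2\mu_{1/2})$. A multipointed $d$-space is a triple $X=(|X|,X^0,\mathbb{P}^{\mathrm{top}}X)$: a space, a subset of states, and a set of continuous maps $[0,1]\to|X|$ (execution paths) with endpoints in $X^0$, closed under precomposition by $\mathcal{M}(1,1)$ and under normalized composition; maps are continuous maps preserving states and execution paths. A directed space is a pair $Y=(|Y|,d(Y))$ with $d(Y)$ a set of continuous maps $[0,1]\to|Y|$ containing all constant paths, closed under normalized composition and under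 precomposition by $\mathcal{I}(1)$; morphisms are continuous maps preserving directed paths. $\vec{\mathrm{Sp}}$ sends a multipointed $d$-space $X$ to the directed space $(|X|,d(X))$ where $d(X)$ consists of all constant paths and all Moore compositions $(\gamma_1\phi_1\mu_{\ell_1})*\dots*(\gamma_n\phi_n\mu_{\ell_n})$ with $n\ge1$, $\ell_i>0$, $\sum\ell_i=1$, $\gamma_i$ execution paths and $\phi_i\in\mathcal{I}(1)$. $\vec{\Omega}$ sends a directed space $(|Y|,d(Y))$ to the multipointed $d$-space $(|Y|,|Y|,d(Y))$. $\vec{\mathrm{Sp}}$ is left adjoint to $\vec{\Omega}$, both acting as identity on underlying maps. *)

From HB Require Import structures.
From mathcomp Require Import all_boot all_order all_algebra.
From mathcomp Require Import all_classical all_reals all_analysis.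
Set Implicit Arguments. Unset Strict Implicit. Unset Printing Implicit Defensive.
Import Order.TTheory GRing.Theory Num.Theory.
Import numFieldNormedType.Exports.
Local Open Scope classical_set_scope.
Local Open Scope ring_scope.

Section Defs.
Variable R : realType.

Local Notation I01 := (set_type (`[0, 1]%classic : set R)).

Lemma clamp_in01 (t : R) : Num.min 1 (Num.max 0 t) \in (`[0, 1]%classic : set R).
Proof.
apply/mem_set => /=; rewrite in_itv /=; apply/andP; split.
  by rewrite le_min ler01 le_max lexx.
by rewrite ge_min lexx.
Qed.

(* clamp t = the point of [0,1] closest to t (only used for t in [0,1] up to
   the endpoints of the subintervals, where it is the identity). *)
Definition clamp (t : R) : I01 := @exist R (fun x => x \in (`[0, 1]%classic : set R)) _ (clamp_in01 t).

Definition dpath (T : Type) := I01 -> T.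

Definition p0 : I01 := clamp 0.
Definition p1 : I01 := clamp 1.

Definition reparamM11 (phi : I01 -> I01) : Prop :=
  continuous phi /\ (forall s t : I01, val s <= val t -> val (phi s) <= val (phi t))
  /\ (forall u : I01, exists s, phi s = u).

Definition reparamI1 (phi : I01 -> I01) : Prop :=
  continuous phi /\ (forall s t : I01, val s <= val t -> val (phi s) <= val (phi t)).

Definition normcomp (T : Type) (g1 g2 : dpath T) : dpath T :=
  fun u => if val u <= 2^-1 then g1 (clamp (2 * val u))
           else g2 (clamp (2 * val u - 1)).

(* Multipointed d-spaces (X^0 = X0, P^top X = P). *)
Definition is_multipointed_dspace (T : topologicalType) (X0 : set T)
    (P : set (dpath T)) : Prop :=
  [/\ (forall g, P g -> continuous g),
      (forall g, P g -> X0 (g p0) /\ X0 (g p1)),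
      (forall g phi, P g -> reparamM11 phi -> P (g \o phi)) &
      (forall g1 g2, P g1 -> P g2 -> g1 p1 = g2 p0 -> P (normcomp g1 g2))].

Definition is_directed_space (T : topologicalType) (d : set (dpath T)) : Prop :=
  [/\ (forall g, d g -> continuous g),
      (forall x : T, d (fun _ => x)),
      (forall g1 g2, d g1 -> d g2 -> g1 p1 = g2 p0 -> d (normcomp g1 g2)) &
      (forall g phi, d g -> reparamI1 phi -> d (g \o phi))].

(* Moore composition (gamma_1 phi_1 mu_{l_1}) * ... * (gamma_n phi_n mu_{l_n}),
   as a function of t in [0, l_1 + ... + l_n]. *)
Fixpoint moore (T : Type) (s : seq (dpath T * (I01 -> I01) * R)) (t : R) : option T :=
  match s with
  | [::] => None
  | [:: (g, phi, l)] => Some (g (phi (clamp (t / l))))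
  | (g, phi, l) :: s' =>
      if t <= l then Some (g (phi (clamp (t / l)))) else moore s' (t - l)
  end.

Fixpoint moore_composable (T : Type) (s : seq (dpath T * (I01 -> I01) * R)) : Prop :=
  match s with
  | (g, phi, _) :: (((g', phi', _) :: _) as s') =>
      g (phi p1) = g' (phi' p0) /\ moore_composable s'
  | _ => True
  end.

Fixpoint all_prop (A : Type) (p : A -> Prop) (s : seq A) : Prop :=
  if s is x :: s' then p x /\ all_prop p s' else True.

(* d(X) for X a multipointed d-space given by (T, X0, P): the set of directed
   paths of Sp(X). *)
Definition dSp (T : topologicalType) (X0 : set T) (P : set (dpath T)) : set (dpath T) :=
  [set g | (exists x : T, g = fun _ => x) \/
    exists (s : seq (dpath T * (I01 -> I01) * R)) (x0 : T),
      [/\ s != [::],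
          all_prop (fun e => [/\ P e.1.1, reparamI1 e.1.2 & 0 < e.2]) s,
          \sum_(e <- s) e.2 = 1,
          moore_composable s &
          g = fun u => odflt x0 (moore s (val u))]].

(* Omega: a directed space (T, d) gives the multipointed d-space (T, [set: T], d). *)

Definition dspace_map (T U : topologicalType) (dT : set (dpath T)) (dU : set (dpath U))
    (f : T -> U) : Prop :=
  continuous f /\ (forall g, dT g -> dU (f \o g)).

Definition mpd_map (T U : topologicalType) (X0 : set T) (P : set (dpath T))
    (Y0 : set U) (Q : set (dpath U)) (f : T -> U) : Prop :=
  [/\ continuous f, (forall x, X0 x -> Y0 (f x)) & (forall g, P g -> Q (f \o g))].

End Defs.

From HB Require Import structures.
From mathcomp Require Import all_boot all_order all_algebra.
From mathcomp Require Import all_classical all_reals all_analysis.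
From mathcomp Require Import ring lra.
Set Implicit Arguments. Unset Strict Implicit. Unset Printing Implicit Defensive.
Import Order.TTheory GRing.Theory Num.Theory.
Import numFieldNormedType.Exports.
Local Open Scope classical_set_scope.
Local Open Scope ring_scope.

Local Notation I01 R := (set_type (`[0, 1]%classic : set R)).

(* A directed path of Sp(Omega X) is either constant or a Moore composition of
   pieces g_i o phi_i, each directed since d(X) is closed under I(1).  By induction
   on the number of pieces, the normalized Moore composition of a head and of the
   (directed) normalized rest is their normalized composition precomposed with a
   piecewise-affine nondecreasing map of [0, 1], hence directed.  Conversely every
   directed path is its own one-piece Moore composition.  Since Omega takes X^0 to
   be all of X, morphisms of Omega X and Omega Y are exactly those of X and Y. *)

Section UnitInterval.
Variable R : realType.

Lemma itv01_val (u : I01 R) : 0 <= val u <= 1.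
Proof. by case: u => x /= /set_mem; rewrite /= in_itv. Qed.

Lemma val_clamp (t : R) : 0 <= t <= 1 -> val (clamp t) = t.
Proof. by case/andP => t0 t1 /=; rewrite (max_r t0) (min_r t1). Qed.

Lemma clamp_val (u : I01 R) : clamp (val u) = u.
Proof. by apply: val_inj; rewrite val_clamp ?itv01_val. Qed.

Lemma le_clamp (x y : R) : x <= y -> val (clamp x) <= val (clamp y).
Proof. by move=> xy /=; apply: le_min2 => //; apply: le_max2. Qed.

Lemma continuous_clamp (T : topologicalType) (f : T -> R) :
  continuous f -> continuous (@clamp R \o f).
Proof.
move=> cf; apply: (@continuous_comp_initial _ _ _ (@set_val R `[0, 1]%classic)).
have -> : set_val \o (@clamp R \o f) = cst 1 \min (cst 0 \max f) by [].
move=> x; apply: continuous_min; first exact: cvg_cst.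
by apply: continuous_max; [exact: cvg_cst | exact: cf].
Qed.

Lemma reparamI1_clamp (f : R -> R) :
  continuous f -> {homo f : x y / x <= y} -> reparamI1 (@clamp R \o f \o val).
Proof.
move=> cf homo_f; split => [|s t st]; last exact/le_clamp/homo_f.
by apply: continuous_clamp => u; apply: continuous_comp; [exact: initial_continuous | exact: cf].
Qed.

End UnitInterval.

Section MoorePair.
Variables (R : realType) (l1 l2 : R).

Definition moore_pair (T : Type) (g1 g2 : dpath R T) : dpath R T :=
  fun u => let t := (l1 + l2) * val u in
    if t <= l1 then g1 (clamp (t / l1)) else g2 (clamp ((t - l1) / l2)).

(* Affine from [0, l1/(l1+l2)] onto [0, 1/2] and from [l1/(l1+l2), 1] onto [1/2, 1]. *)
Definition moore_pair_reparam (t : R) : R :=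
  Num.min ((l1 + l2) * t / (2 * l1)) 2^-1 + Num.max 0 (((l1 + l2) * t - l1) / (2 * l2)).

Lemma continuous_moore_pair_reparam : continuous moore_pair_reparam.
Proof.
pose f1 t := (l1 + l2) * t / (2 * l1); pose f2 t := ((l1 + l2) * t - l1) / (2 * l2).
have cf1 : continuous f1.
  move=> t; apply: continuousM; last exact: cvg_cst.
  by apply: continuousM; [exact: cvg_cst | exact: cvg_id].
have cf2 : continuous f2.
  move=> t; apply: (@continuousM _ _ (fun t => (l1 + l2) * t - l1)); last exact: cvg_cst.
  apply: (@continuousD _ _ _ ( *%R (l1 + l2)) (cst (- l1))); last exact: cvg_cst.
  by apply: continuousM; [exact: cvg_cst | exact: cvg_id].
move=> t; apply: (@continuousD _ _ _ (f1 \min cst 2^-1) (cst 0 \max f2)).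
  by apply: continuous_min; [exact: cf1 | exact: cvg_cst].
by apply: continuous_max; [exact: cvg_cst | exact: cf2].
Qed.

Lemma moore_pair_reparam_homo (l1_gt0 : 0 < l1) (l2_gt0 : 0 < l2) :
  {homo moore_pair_reparam : x y / x <= y}.
Proof.
have l12_ge0 : 0 <= l1 + l2 by lra.
move=> x y xy; apply: lerD.
  apply: le_min2 => //; apply: ler_wpM2r; first by rewrite invr_ge0 mulr_ge0 ?ltW.
  exact: ler_wpM2l.
apply: le_max2 => //; apply: ler_wpM2r; first by rewrite invr_ge0 mulr_ge0 ?ltW.
by rewrite lerD2r ler_wpM2l.
Qed.

Lemma moore_pair_reparam_le (l1_gt0 : 0 < l1) (l2_gt0 : 0 < l2) (t : R) :
  (l1 + l2) * t <= l1 ->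
  moore_pair_reparam t = (l1 + l2) * t / (2 * l1).
Proof.
move=> tl1; rewrite /moore_pair_reparam min_l; last first.
  by rewrite ler_pdivrMr ?mulr_gt0 //; lra.
by rewrite max_l ?addr0 // ler_pdivrMr ?mulr_gt0 // mul0r; lra.
Qed.

Lemma moore_pair_reparam_gt (l1_gt0 : 0 < l1) (l2_gt0 : 0 < l2) (t : R) :
  l1 < (l1 + l2) * t ->
  moore_pair_reparam t = 2^-1 + ((l1 + l2) * t - l1) / (2 * l2).
Proof.
move=> tl1; rewrite /moore_pair_reparam min_r; last first.
  by rewrite ler_pdivlMr ?mulr_gt0 //; lra.
by rewrite max_r // ler_pdivlMr ?mulr_gt0 // mul0r; lra.
Qed.

Lemma moore_pair_normcomp (l1_gt0 : 0 < l1) (l2_gt0 : 0 < l2)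
    (T : Type) (g1 g2 : dpath R T) :
  moore_pair g1 g2 = normcomp g1 g2 \o (@clamp R \o moore_pair_reparam \o val).
Proof.
apply: funext => u; rewrite /moore_pair /normcomp /comp.
have /andP[u0 u1] := itv01_val u.
have t0 : 0 <= (l1 + l2) * val u by rewrite mulr_ge0 //; lra.
have tl : (l1 + l2) * val u <= l1 + l2 by rewrite ler_piMr //; lra.
have [tl1 | l1t] := leP ((l1 + l2) * val u) l1.
  rewrite moore_pair_reparam_le //; set t := (l1 + l2) * val u in t0 tl tl1 *.
  have t_half : t / (2 * l1) <= 2^-1 by rewrite ler_pdivrMr ?mulr_gt0 //; lra.
  rewrite val_clamp; last by rewrite divr_ge0 ?mulr_ge0 //=; lra.
  by rewrite t_half; congr (g1 (clamp _)); field; rewrite gt_eqF.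
rewrite moore_pair_reparam_gt //; set t := (l1 + l2) * val u in t0 tl l1t *.
have half_lt : (t - l1) / (2 * l2) <= 2^-1 by rewrite ler_pdivrMr ?mulr_gt0 //; lra.
have half_gt : 0 < (t - l1) / (2 * l2) by rewrite divr_gt0 ?mulr_gt0 //; lra.
rewrite val_clamp; last by apply/andP; lra.
rewrite ifF; last by apply/negbTE; rewrite -ltNge; lra.
by congr (g2 (clamp _)); field; rewrite gt_eqF.
Qed.

Lemma directed_moore_pair (l1_gt0 : 0 < l1) (l2_gt0 : 0 < l2)
    (T : topologicalType) (d : set (dpath R T)) (g1 g2 : dpath R T) :
  is_directed_space d -> d g1 -> d g2 -> g1 (p1 R) = g2 (p0 R) -> d (moore_pair g1 g2).
Proof.
case=> _ _ d_normcomp d_reparam dg1 dg2 g12; rewrite moore_pair_normcomp //.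
apply: d_reparam; first exact: d_normcomp.
apply: reparamI1_clamp; first exact: continuous_moore_pair_reparam.
exact: moore_pair_reparam_homo.
Qed.

End MoorePair.

Lemma sub_all_prop (A : Type) (p q : A -> Prop) (s : seq A) :
  (forall x, p x -> q x) -> all_prop p s -> all_prop q s.
Proof. by move=> pq; elim: s => //= x s IH [/pq qx /IH]. Qed.

Section MoorePath.
Variables (R : realType) (T : eqType).
Local Notation entry := (dpath R T * (I01 R -> I01 R) * R)%type.

Definition moore_length (s : seq entry) : R := \sum_(e <- s) e.2.

Definition moore_path (x0 : T) (s : seq entry) : dpath R T :=
  fun u => odflt x0 (moore s (moore_length s * val u)).

Lemma moore_length_gt0 (s : seq entry) :
  s != [::] -> all_prop (fun e => 0 < e.2) s -> 0 < moore_length s.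
Proof.
rewrite /moore_length; elim: s => [//|e s IH] _ /= [e_gt0 s_gt0].
rewrite big_cons; case: s IH s_gt0 => [|e' s] IH s_gt0; first by rewrite big_nil addr0.
by rewrite addr_gt0 // IH.
Qed.

Lemma moore_cons (e : entry) (s : seq entry) (t : R) : s != [::] ->
  moore (e :: s) t =
    if t <= e.2 then Some (e.1.1 (e.1.2 (clamp (t / e.2)))) else moore s (t - e.2).
Proof. by case: e => [[g phi] l]; case: s. Qed.

Lemma moore_at0 (e : entry) (s : seq entry) :
  0 <= e.2 -> moore (e :: s) 0 = Some (e.1.1 (e.1.2 (p0 R))).
Proof. by case: e => [[g phi] l] /= l_ge0; case: s => [|e' s] /=; rewrite ?l_ge0 mul0r. Qed.

Lemma moore_path_single (x0 : T) (g : dpath R T) (phi : I01 R -> I01 R) (l : R) :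
  l != 0 -> moore_path x0 [:: (g, phi, l)] = g \o phi.
Proof.
move=> l_neq0; apply: funext => u.
by rewrite /moore_path /moore_length big_seq1 /= [l * _]mulrC mulfK // clamp_val.
Qed.

Lemma moore_path_cons (x0 : T) (e : entry) (s : seq entry) :
  s != [::] -> 0 < e.2 -> 0 < moore_length s ->
  moore_path x0 (e :: s) = moore_pair e.2 (moore_length s) (e.1.1 \o e.1.2) (moore_path x0 s).
Proof.
move=> s_ne e_gt0 L_gt0; apply: funext => u.
rewrite /moore_path /moore_pair {1}/moore_length big_cons moore_cons //.
set t := (e.2 + moore_length s) * val u.
case: ifPn => //; rewrite -ltNge => e_lt_t.
have /andP[_ u1] := itv01_val u.
have t_le : t <= e.2 + moore_length s by rewrite ler_piMr //; lra.
rewrite val_clamp; last by rewrite divr_ge0 ?ler_pdivrMr //=; lra.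
by rewrite mulrC divfK ?gt_eqF.
Qed.

End MoorePath.

Lemma directed_moore_path (R : realType) (T : topologicalType) (d : set (dpath R T))
    (x0 : T) (s : seq (dpath R T * (I01 R -> I01 R) * R)) :
  is_directed_space d -> s != [::] ->
  all_prop (fun e => [/\ d e.1.1, reparamI1 e.1.2 & 0 < e.2]) s -> moore_composable s ->
  d (moore_path x0 s).
Proof.
move=> d_directed; have [_ _ _ d_reparam] := d_directed.
elim: s => [//|[[g phi] l] s IH] _ /= [[dg phi_I1 l_gt0] s_good].
case: s IH s_good => [_ _ _ | [[g' phi'] l'] s IH s_good [glue s_comp]].
  by rewrite moore_path_single ?gt_eqF //; exact: d_reparam.
have s_len : 0 < moore_length ((g', phi', l') :: s).
  by apply: moore_length_gt0 => //; apply: sub_all_prop s_good => e [].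
rewrite moore_path_cons //; apply: directed_moore_pair => //; first exact: d_reparam.
  exact: IH.
rewrite [RHS]/moore_path val_clamp ?ler01 ?lexx // mulr0 moore_at0 //.
by have [_ _ /ltW] := s_good.1.
Qed.

Lemma dSp_Omega (R : realType) (T : topologicalType) (d : set (dpath R T)) :
  is_directed_space d -> dSp [set: T] d = d.
Proof.
move=> d_directed; apply/seteqP; split => g.
  case=> [[x ->] | [s [x0 [s_ne s_good s_len s_comp ->]]]]; first by case: d_directed.
  have -> : (fun u => odflt x0 (moore s (val u))) = moore_path x0 s.
    by apply: funext => u; rewrite /moore_path /moore_length s_len mul1r.
  exact: directed_moore_path.
move=> dg; right; exists [:: (g, id, 1)], (g (p0 R)); split => //.
- by split => //; split => //; split => // x; exact: cvg_id.
- by rewrite big_seq1.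
- by apply: funext => u /=; rewrite divr1 clamp_val.
Qed.

Lemma mpd_map_Omega (R : realType) (T U : topologicalType) (dT : set (dpath R T))
    (dU : set (dpath R U)) (f : T -> U) :
  mpd_map [set: T] dT [set: U] dU f <-> dspace_map dT dU f.
Proof. by split => [[]|[]]. Qed.

Unset Implicit Arguments. Set Strict Implicit.
Local Close Scope ring_scope.

Theorem theorem3p6 (R : realType) :
  (* Sp(Omega(X)) = X for every directed space X = (T, d) *)
  (forall (T : topologicalType) (d : set (dpath R T)),
      is_directed_space d -> dSp [set: T] d = d) /\
  (* Omega is fully faithful: maps Omega X -> Omega Y are exactly maps X -> Y *)
  (forall (T U : topologicalType) (dT : set (dpath R T)) (dU : set (dpath R U)),
      is_directed_space dT -> is_directed_space dU ->
      forall f : T -> U,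
        mpd_map [set: T] dT [set: U] dU f <-> dspace_map dT dU f).
Proof.
split; first exact: dSp_Omega.
by move=> T U dT dU _ _ f; exact: mpd_map_Omega.
Qed.
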